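(* Let $c>0$, $n\ge 2$, and let $\mathbb{R}^n_c=\{\mathbf{v}\in\mathbb{R}^n:\|\mathbf{v}\|<c\}$ be equipped with Möbius addition $\oplus$, Möbius scalar multiplication $\otimes$ and Möbius coaddition $\boxplus$ (defined in the context). Let $A,B\in\mathbb{R}^n_c$ be distinct and, for $t\in\mathbb{R}$, define $$P_{AB}(t)=\tfrac12\otimes A\;\boxplus\;\Big\{\tfrac12\otimes A\oplus\Big[\big(\ominus\tfrac12\otimes A\oplus(B\ominus\tfrac12\otimes A)\big)\otimes t\Big]\Big\}.$$ Then $\{P_{AB}(t):t\in\mathbb{R}\}$ is the unique Euclidean straight line through $A$ and $B$ (intersected with the ball $\mathbb{R}^n_c$), i.e. it equals the set of points of $\mathbb{R}^n_c$ lying on the Euclidean line through $A$ and $B$.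
   Context: Möbius addition in the ball $\mathbb{R}^n_c$ is $$\mathbf{u}\oplus\mathbf{v}=\frac{\big(1+\frac{2}{c^2}\mathbf{u}\cdot\mathbf{v}+\frac{1}{c^2}\|\mathbf{v}\|^2\big)\mathbf{u}+\big(1-\frac{1}{c^2}\|\mathbf{u}\|^2\big)\mathbf{v}}{1+\frac{2}{c^2}\mathbf{u}\cdot\mathbf{v}+\frac{1}{c^4}\|\mathbf{u}\|^2\|\mathbf{v}\|^2},$$ with $\ominus\mathbf{v}=-\mathbf{v}$ and $\mathbf{u}\ominus\mathbf{v}=\mathbf{u}\oplus(-\mathbf{v})$. Scalar multiplication: for $r\in\mathbb{R}$ and $\mathbf{v}\neq\mathbf{0}$, $r\otimes\mathbf{v}=\mathbf{v}\otimes r=c\tanh\!\big(r\tanh^{-1}(\|\mathbf{v}\|/c)\big)\frac{\mathbf{v}}{\|\mathbf{v}\|}$, and $r\otimes\mathbf{0}=\mathbf{0}$; scalar multiplication binds more tightly than $\oplus,\ominus,\boxplus$. The gyration generated by $\mathbf{u},\mathbf{v}$ is $\mathrm{gyr}[\mathbf{u},\mathbf{v}]\mathbf{w}=\ominus(\mathbf{u}\oplus\mathbf{v})\oplus\big(\mathbf{u}\oplus(\mathbf{v}\oplus\mathbf{w})\big)$. Möbius coaddition is $\mathbf{a}\boxplus\mathbf{b}=\mathbf{a}\oplus\mathrm{gyr}[\mathbf{a},\ominus\mathbf{b}]\mathbf{b}$. *)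

From HB Require Import structures.
From mathcomp Require Import all_boot all_order all_algebra.
From mathcomp Require Import all_classical all_reals all_analysis.
Set Implicit Arguments. Unset Strict Implicit. Unset Printing Implicit Defensive.
Import Order.TTheory GRing.Theory Num.Theory.
Local Open Scope ring_scope.

Definition edot {R : realType} {n : nat} (u v : 'rV[R]_n) : R :=
  \sum_(i < n) u 0 i * v 0 i.
Definition enorm {R : realType} {n : nat} (v : 'rV[R]_n) : R :=
  Num.sqrt (edot v v).

Definition tanhR {R : realType} (x : R) : R :=
  (expR x - expR (- x)) / (expR x + expR (- x)).
Definition artanhR {R : realType} (x : R) : R := ln ((1 + x) / (1 - x)) / 2.

Definition madd {R : realType} {n : nat} (c : R) (u v : 'rV[R]_n) : 'rV[R]_n :=
  (1 + 2 / c ^+ 2 * edot u v + 1 / c ^+ 4 * enorm u ^+ 2 * enorm v ^+ 2)^-1 *: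
  ((1 + 2 / c ^+ 2 * edot u v + 1 / c ^+ 2 * enorm v ^+ 2) *: u
     + (1 - 1 / c ^+ 2 * enorm u ^+ 2) *: v).

(* Möbius subtraction u (-) v = u (+) (-v); (-) v = -v *)
Definition msub {R : realType} {n : nat} (c : R) (u v : 'rV[R]_n) : 'rV[R]_n :=
  madd c u (- v).

Definition mscale {R : realType} {n : nat} (c : R) (r : R) (v : 'rV[R]_n) : 'rV[R]_n :=
  if v == 0 then 0
  else (c * tanhR (r * artanhR (enorm v / c)) / enorm v) *: v.

Definition gyr {R : realType} {n : nat} (c : R) (u v w : 'rV[R]_n) : 'rV[R]_n :=
  madd c (- madd c u v) (madd c u (madd c v w)).

Definition mcoadd {R : realType} {n : nat} (c : R) (a b : 'rV[R]_n) : 'rV[R]_n :=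
  madd c a (gyr c a (- b) b).

Definition PAB {R : realType} {n : nat} (c : R) (A B : 'rV[R]_n) (t : R) : 'rV[R]_n :=
  let hA := mscale c (2^-1) A in
  mcoadd c hA (madd c hA (mscale c t (madd c (- hA) (msub c B hA)))).

(* With M = 1/2 (x) A, the identities x (+) ((-) (x (+) y)) = (-) y and
   (-) b (+) b = 0 collapse the gyration in the coaddition, so that
   P_AB(t) = M (+) ((t (x) u) (+) M) with u = (-) M (+) (B (-) M).
   Möbius addition only involves the inner products scaled by c^2, so the
   "sandwich" v |-> M (+) (v (+) M) maps v to an explicit combination of M and v;
   the sandwich by (-) M inverts it, hence it maps u to B, and it maps 0 to
   M (+) M = 2 (x) M = A.  As t ranges over R, t (x) u ranges over the multiples
   l u lying in the ball, and the sandwich moves them along the Euclidean line AB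
   through a Möbius change of parameter l |-> s.  Every point of the line in the
   ball is reached: at the only value of s missed, the pole of the inverse change
   of parameter, the point of the line lies outside the ball. *)

From Pilot Require Import Defs.
From HB Require Import structures.
From mathcomp Require Import all_boot all_order all_algebra.
From mathcomp Require Import all_classical all_reals all_analysis.
From mathcomp Require Import ring lra.
Import Order.TTheory GRing.Theory Num.Theory.
Local Open Scope ring_scope.
Local Open Scope classical_set_scope.

Section EuclideanDot.
Context {R : realType} {n : nat}.
Implicit Types (u v w : 'rV[R]_n) (a : R).

Lemma edotC u v : edot u v = edot v u.
Proof. by apply: eq_bigr => i _; rewrite mulrC. Qed.

Lemma edotDl u v w : edot (u + v) w = edot u w + edot v w.
Proof. by rewrite /edot -big_split; apply: eq_bigr => i _; rewrite !mxE mulrDl. Qed.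

Lemma edotZl a u v : edot (a *: u) v = a * edot u v.
Proof. by rewrite /edot mulr_sumr; apply: eq_bigr => i _; rewrite !mxE mulrA. Qed.

Lemma edotDr u v w : edot w (u + v) = edot w u + edot w v.
Proof. by rewrite edotC edotDl !(edotC w). Qed.

Lemma edotZr a u v : edot u (a *: v) = a * edot u v.
Proof. by rewrite edotC edotZl edotC. Qed.

Lemma edot0l v : edot 0 v = 0.
Proof. by rewrite -(scale0r 0) edotZl mul0r. Qed.

Lemma edot_ge0 u : 0 <= edot u u.
Proof. by apply: sumr_ge0 => i _; rewrite -expr2 sqr_ge0. Qed.

Lemma edot_eq0 u : (edot u u == 0) = (u == 0).
Proof.
apply/idP/eqP => [|->]; last by rewrite edot0l.
rewrite psumr_eq0 => [/allP uu0|i _]; last by rewrite -expr2 sqr_ge0.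
apply/rowP => i; have := uu0 i (mem_index_enum i).
by rewrite /= mulf_eq0 orbb mxE => /eqP.
Qed.

Lemma edot_gt0 {u} : u != 0 -> 0 < edot u u.
Proof. by move=> u0; rewrite lt0r edot_eq0 u0 edot_ge0. Qed.

Lemma enorm_sqr u : enorm u ^+ 2 = edot u u.
Proof. by rewrite sqr_sqrtr // edot_ge0. Qed.

Lemma enorm_gt0 {u} : u != 0 -> 0 < enorm u.
Proof. by move=> u0; rewrite sqrtr_gt0 edot_gt0. Qed.

Lemma edot_CauchySchwarz u v : edot u v ^+ 2 <= edot u u * edot v v.
Proof.
have [->|u0] := eqVneq u 0.
  by rewrite !edot0l expr0n mul0r.
(* expand |a v - p u|^2 >= 0 with a = |u|^2 and p = (u, v) *)
have := edot_ge0 (edot u u *: v - edot u v *: u).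
rewrite -scaleNr !edotDl !edotDr !edotZl !edotZr (edotC v u).
have := edot_gt0 u0; set a := edot u u; set p := edot u v; set b := edot v v.
by move=> a0 h; rewrite -subr_ge0; nra.
Qed.

End EuclideanDot.

Definition cdot {R : realType} {n : nat} (c : R) (u v : 'rV[R]_n) : R :=
  c ^-2 * edot u v.

Definition lcomb {R : realType} {n : nat} (x y : 'rV[R]_n) (a b : R) : 'rV[R]_n :=
  a *: x + b *: y.

Section ScaledDot.
Context {R : realType} {n : nat} {c : R}.
Implicit Types (u v x y : 'rV[R]_n) (a b : R).

Lemma cdotC u v : cdot c u v = cdot c v u.
Proof. by rewrite /cdot edotC. Qed.

Lemma cdotZl a u v : cdot c (a *: u) v = a * cdot c u v.
Proof. by rewrite /cdot edotZl mulrCA. Qed.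

Lemma cdotZr a u v : cdot c u (a *: v) = a * cdot c u v.
Proof. by rewrite /cdot edotZr mulrCA. Qed.

Lemma cdotNl u v : cdot c (- u) v = - cdot c u v.
Proof. by rewrite -scaleN1r cdotZl mulN1r. Qed.

Lemma cdotNr u v : cdot c u (- v) = - cdot c u v.
Proof. by rewrite -scaleN1r cdotZr mulN1r. Qed.

Lemma cdot0r u : cdot c u 0 = 0.
Proof. by rewrite -(scale0r 0) cdotZr mul0r. Qed.

Lemma cdot_ge0 u : 0 <= cdot c u u.
Proof. by rewrite mulr_ge0 ?edot_ge0 // invr_ge0 sqr_ge0. Qed.

Lemma cdot_CauchySchwarz u v : cdot c u v ^+ 2 <= cdot c u u * cdot c v v.
Proof.
rewrite /cdot exprMn [in X in _ <= X]mulrACA -[c ^-2 * _]expr2.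
by rewrite ler_wpM2l ?sqr_ge0 ?edot_CauchySchwarz.
Qed.

Lemma cdot_enorm u : cdot c u u = (enorm u / c) ^+ 2.
Proof. by rewrite expr_div_n enorm_sqr mulrC. Qed.

Lemma enorm_lt_cdot u : 0 < c -> (enorm u < c) = (cdot c u u < 1).
Proof.
move=> c0; rewrite cdot_enorm expr_div_n ltr_pdivrMr ?exprn_gt0 // mul1r.
by rewrite ltr_pXn2r ?nnegrE ?sqrtr_ge0 ?ltW.
Qed.

Lemma cdot_lcomb x y a1 b1 a2 b2 :
  cdot c (lcomb x y a1 b1) (lcomb x y a2 b2) =
  a1 * a2 * cdot c x x + (a1 * b2 + b1 * a2) * cdot c x y + b1 * b2 * cdot c y y.
Proof.
rewrite /lcomb /cdot !edotDl !edotDr !edotZl !edotZr (edotC y x); ring.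
Qed.

Lemma cdot_lcombr x y a b :
  cdot c x (lcomb x y a b) = a * cdot c x x + b * cdot c x y.
Proof. by rewrite /lcomb /cdot edotDr !edotZr; ring. Qed.

Lemma lcomb01 x y : lcomb x y 0 1 = y.
Proof. by rewrite /lcomb scale1r scale0r add0r. Qed.

Lemma lcombN x y a b : - lcomb x y a b = lcomb x y (- a) (- b).
Proof. by rewrite /lcomb opprD !scaleNr. Qed.

Lemma lcombNl x y a b : lcomb (- x) y a b = lcomb x y (- a) b.
Proof. by rewrite /lcomb scalerN scaleNr. Qed.

Lemma lcombC x y a b : lcomb x y a b = lcomb y x b a.
Proof. by rewrite /lcomb addrC. Qed.

Lemma lcomb_nest x y a b s t :
  lcomb x (lcomb x y a b) s t = lcomb x y (s + t * a) (t * b).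
Proof. by apply/rowP => i; rewrite /lcomb !mxE; ring. Qed.

End ScaledDot.

Section MoebiusAddition.
Context {R : realType} {n : nat} {c : R}.
Implicit Types (u v x y M : 'rV[R]_n).

Local Notation "u ⊙ v" := (cdot c u v) (at level 40).

Lemma maddE u v : madd c u v =
  lcomb u v ((1 + 2 * (u ⊙ v) + v ⊙ v) / (1 + 2 * (u ⊙ v) + (u ⊙ u) * (v ⊙ v)))
            ((1 - u ⊙ u) / (1 + 2 * (u ⊙ v) + (u ⊙ u) * (v ⊙ v))).
Proof.
have c4 : 1 / c ^+ 4 = c ^-2 ^+ 2 by rewrite mul1r exprVn -exprM.
rewrite /madd /lcomb /cdot !enorm_sqr c4 scalerDr !scalerA; congr (_ *: _ + _ *: _).
  by rewrite mulrC; congr (_ / _); ring.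
by rewrite mulrC; congr (_ / _); ring.
Qed.

Lemma madd_den_gt0 {u v} : u ⊙ u < 1 -> v ⊙ v < 1 ->
  0 < 1 + 2 * (u ⊙ v) + (u ⊙ u) * (v ⊙ v).
Proof.
move=> u1 v1; have := cdot_CauchySchwarz (c := c) u v.
have := cdot_ge0 (c := c) u; have := cdot_ge0 (c := c) v.
move: (u ⊙ v) (u ⊙ u) (v ⊙ v) u1 v1 => q m r m1 r1 r0 m0 qmr.
have mr1 : m * r < 1 by nra.
have q1 : q ^+ 2 < 1 by lra.
have : -1 < q by nra.
nra.
Qed.

Lemma mid_den_gt0 {u v} : u ⊙ u < 1 -> v ⊙ v < 1 -> 0 < 1 + u ⊙ u + 2 * (u ⊙ v).
Proof.
move=> u1 v1; have := cdot_CauchySchwarz (c := c) u v.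
have := cdot_ge0 (c := c) u; have := cdot_ge0 (c := c) v.
move: (u ⊙ v) (u ⊙ u) (v ⊙ v) u1 v1 => q m r m1 r1 r0 m0 qmr.
have qm : q ^+ 2 <= m by nra.
have : (2 * q) ^+ 2 < (1 + m) ^+ 2 by nra.
nra.
Qed.

Lemma one_sub_cdot_madd u v : u ⊙ u < 1 -> v ⊙ v < 1 ->
  1 - madd c u v ⊙ madd c u v =
  (1 - u ⊙ u) * (1 - v ⊙ v) / (1 + 2 * (u ⊙ v) + (u ⊙ u) * (v ⊙ v)).
Proof.
move=> u1 v1; have D0 := madd_den_gt0 u1 v1.
rewrite maddE cdot_lcomb.
by field; rewrite gt_eqF.
Qed.

Lemma cdot_madd_lt1 {u v} : u ⊙ u < 1 -> v ⊙ v < 1 -> madd c u v ⊙ madd c u v < 1.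
Proof.
move=> u1 v1; rewrite -subr_gt0 one_sub_cdot_madd //.
by rewrite divr_gt0 ?madd_den_gt0 // mulr_gt0 // subr_gt0.
Qed.

Lemma maddr0 u : madd c u 0 = u.
Proof. by rewrite maddE !cdot0r /lcomb !(mulr0, addr0) divr1 scale1r scaler0 addr0. Qed.

Lemma madd0l u : madd c 0 u = u.
Proof.
rewrite maddE cdotC !cdot0r /lcomb !(mul0r, mulr0, addr0) subr0 scaler0 add0r.
by rewrite divr1 scale1r.
Qed.

Lemma maddNr u : madd c (- u) u = 0.
Proof.
rewrite maddE !(cdotNl, cdotNr) opprK.
have -> : 1 + 2 * - (u ⊙ u) + u ⊙ u = 1 - u ⊙ u by ring.
by rewrite /lcomb scalerN addNr.
Qed.

Lemma madd_diag u : madd c u u = (2 / (1 + u ⊙ u)) *: u.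
Proof.
have u0 := cdot_ge0 (c := c) u.
rewrite maddE /lcomb -scalerDl; congr (_ *: _).
by field; rewrite !gt_eqF //; nra.
Qed.

Lemma madd_den_opp_madd x y : x ⊙ x < 1 -> y ⊙ y < 1 ->
  1 + 2 * (x ⊙ - madd c x y) + (x ⊙ x) * (- madd c x y ⊙ - madd c x y) =
  (1 - x ⊙ x) ^+ 2 / (1 + 2 * (x ⊙ y) + (x ⊙ x) * (y ⊙ y)).
Proof.
move=> x1 y1; have D0 := madd_den_gt0 x1 y1.
rewrite cdotNr cdotNl cdotNr opprK maddE cdot_lcombr cdot_lcomb.
by field; rewrite gt_eqF.
Qed.

Lemma madd_opp_madd x y : x ⊙ x < 1 -> y ⊙ y < 1 -> madd c x (- madd c x y) = - y.
Proof.
move=> x1 y1; have D0 := madd_den_gt0 x1 y1.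
rewrite [madd c x (- _)]maddE madd_den_opp_madd //.
rewrite cdotNr cdotNl cdotNr opprK [madd c x y]maddE lcombN lcomb_nest.
rewrite cdot_lcombr cdot_lcomb.
have -> : - y = lcomb x y 0 (- 1) by rewrite /lcomb scale0r add0r scaleN1r.
by congr lcomb; field; rewrite !gt_eqF ?subr_gt0.
Qed.

Lemma mcoaddE u v : mcoadd c u v = madd c u (madd c (- madd c u (- v)) u).
Proof. by rewrite /mcoadd /gyr maddNr maddr0. Qed.

Lemma mcoadd_madd M v : M ⊙ M < 1 -> v ⊙ v < 1 ->
  mcoadd c M (madd c M v) = madd c M (madd c v M).
Proof. by move=> M1 v1; rewrite mcoaddE madd_opp_madd // opprK. Qed.

Lemma madd_den_sandwich M v : M ⊙ M < 1 -> v ⊙ v < 1 ->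
  1 + 2 * (M ⊙ madd c v M) + (M ⊙ M) * (madd c v M ⊙ madd c v M) =
  (1 + M ⊙ M + 2 * (M ⊙ v)) ^+ 2 / (1 + 2 * (v ⊙ M) + (v ⊙ v) * (M ⊙ M)).
Proof.
move=> M1 v1; have D1 := madd_den_gt0 v1 M1.
rewrite maddE lcombC cdot_lcombr cdot_lcomb (cdotC v M) in D1 *.
by field; rewrite gt_eqF.
Qed.

Lemma madd_sandwich M v : M ⊙ M < 1 -> v ⊙ v < 1 ->
  madd c M (madd c v M) =
  lcomb M v ((2 + 2 * (M ⊙ v)) / (1 + M ⊙ M + 2 * (M ⊙ v)))
            ((1 - M ⊙ M) / (1 + M ⊙ M + 2 * (M ⊙ v))).
Proof.
move=> M1 v1; have D1 := madd_den_gt0 v1 M1; have D3 := mid_den_gt0 M1 v1.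
rewrite [madd c M _]maddE madd_den_sandwich //.
rewrite [madd c v M]maddE [lcomb v M _ _]lcombC lcomb_nest cdot_lcombr cdot_lcomb.
rewrite !(cdotC v M) in D1 *.
by congr lcomb; field; rewrite !gt_eqF.
Qed.

Lemma madd_sandwichK M v : M ⊙ M < 1 -> v ⊙ v < 1 ->
  madd c M (madd c (madd c (- M) (madd c v (- M))) M) = v.
Proof.
move=> M1 v1; have NM1 : - M ⊙ - M < 1 by rewrite cdotNl cdotNr opprK.
have D := mid_den_gt0 NM1 v1.
rewrite madd_sandwich ?cdot_madd_lt1 // madd_sandwich // lcombNl lcomb_nest.
rewrite cdot_lcombr !(cdotNl, cdotNr) opprK in D *.
rewrite -[RHS](lcomb01 M); congr lcomb; field; rewrite ?gt_eqF ?subr_gt0 //; nra.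
Qed.

End MoebiusAddition.

Section HyperbolicTangent.
Context {R : realType}.
Implicit Types (y z : R).

Lemma tanhRE z : tanhR z = (expR (2 * z) - 1) / (expR (2 * z) + 1).
Proof.
have ez := expR_gt0 z.
rewrite /tanhR expRN (_ : 2 * z = z + z) ?expRD; last by ring.
by field; rewrite !gt_eqF //; nra.
Qed.

Lemma tanhR_sqr_lt1 z : tanhR z ^+ 2 < 1.
Proof.
rewrite tanhRE; have := expR_gt0 (2 * z); set E := expR _ => E0.
by rewrite expr_div_n ltr_pdivrMr ?exprn_gt0 ?mul1r; nra.
Qed.

Lemma tanhR_artanhR y : -1 < y < 1 -> tanhR (artanhR y) = y.
Proof.
case/andP=> y1 y2; rewrite tanhRE /artanhR [2 * _]mulrC divfK ?pnatr_eq0 //.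
by rewrite lnK ?posrE ?divr_gt0 ?subr_gt0 //; [field; lra | lra].
Qed.

Lemma tanhR_double z : tanhR (2 * z) = 2 * tanhR z / (1 + tanhR z ^+ 2).
Proof.
rewrite !tanhRE (_ : 2 * (2 * z) = 2 * z + 2 * z) ?expRD; last by ring.
have := expR_gt0 (2 * z); set E := expR _ => E0.
by field; rewrite !gt_eqF //; nra.
Qed.

Lemma artanhR_gt0 y : 0 < y < 1 -> 0 < artanhR y.
Proof.
case/andP=> y0 y1; rewrite divr_gt0 // ln_gt0 // ltr_pdivlMr ?subr_gt0 //.
lra.
Qed.

End HyperbolicTangent.

Section MoebiusScaling.
Context {R : realType} {n : nat} {c : R}.
Hypothesis c_gt0 : 0 < c.
Implicit Types (u : 'rV[R]_n) (t l : R).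

Lemma mscaleE t u : u != 0 ->
  Defs.mscale c t u = (c * tanhR (t * artanhR (enorm u / c)) / enorm u) *: u.
Proof. by rewrite /Defs.mscale => /negPf->. Qed.

Lemma cdot_mscaleE t u : u != 0 ->
  cdot c (Defs.mscale c t u) (Defs.mscale c t u) = tanhR (t * artanhR (enorm u / c)) ^+ 2.
Proof.
move=> u0; have u_gt0 := enorm_gt0 u0.
rewrite mscaleE // cdotZl cdotZr cdot_enorm.
by field; rewrite !gt_eqF.
Qed.

Lemma cdot_mscale_lt1 t u : cdot c (Defs.mscale c t u) (Defs.mscale c t u) < 1.
Proof.
have [->|u0] := eqVneq u 0; first by rewrite /Defs.mscale eqxx cdot0r.
by rewrite cdot_mscaleE ?tanhR_sqr_lt1.
Qed.

Lemma madd_mscale_half u : cdot c u u < 1 ->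
  madd c (Defs.mscale c 2^-1 u) (Defs.mscale c 2^-1 u) = u.
Proof.
have [->|u0] := eqVneq u 0; first by rewrite /Defs.mscale eqxx madd_diag scaler0.
move=> u1; have u_gt0 := enorm_gt0 u0.
rewrite madd_diag cdot_mscaleE // mscaleE // scalerA.
rewrite cdot_enorm in u1; set r := enorm u / c in u1 *.
have r0 : 0 < r by rewrite divr_gt0.
have r1 : r < 1 by nra.
(* [2 (x) (1/2 (x) u) = u] is the duplication formula for tanh *)
have := tanhR_double (2^-1 * artanhR r).
rewrite mulrA divff ?pnatr_eq0 // mul1r tanhR_artanhR; last by apply/andP; lra.
set T := tanhR _ => rT.
suff -> : 2 / (1 + T ^+ 2) * (c * T / enorm u) = 1 by rewrite scale1r.
have -> : enorm u = r * c by rewrite /r divfK ?gt_eqF.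
have T2 : 0 < 1 + T ^+ 2 by have := sqr_ge0 T; lra.
have T0 : T != 0 by move: r0; rewrite rT; apply: contraTneq => ->; rewrite mulr0 mul0r ltxx.
by rewrite rT; field; rewrite T0 !gt_eqF.
Qed.

Lemma range_mscale u : u != 0 -> cdot c u u < 1 ->
  range (fun t => Defs.mscale c t u) = [set l *: u | l in [set l | l ^+ 2 * cdot c u u < 1]].
Proof.
move=> u0 u1; have u_gt0 := enorm_gt0 u0.
rewrite cdot_enorm in u1 *; set r := enorm u / c in u1 *.
have r0 : 0 < r by rewrite divr_gt0.
have r1 : r < 1 by nra.
have ur : enorm u = r * c by rewrite /r divfK ?gt_eqF.
apply/seteqP; split=> _ /= [x xu <-].
  exists (c * tanhR (x * artanhR r) / enorm u); last by rewrite mscaleE.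
  rewrite /= ur; have := tanhR_sqr_lt1 (x * artanhR r).
  by congr (_ < _); field; rewrite !gt_eqF.
have xr : -1 < x * r < 1.
  by move: xu; rewrite /= -exprMn => xr1; apply/andP; split; nra.
have ar : 0 < artanhR r by apply: artanhR_gt0; rewrite r0 r1.
exists (artanhR (x * r) / artanhR r) => //.
rewrite mscaleE // -/r divfK ?gt_eqF // tanhR_artanhR // ur.
by congr (_ *: _); field; rewrite !gt_eqF.
Qed.

End MoebiusScaling.

Section SandwichLine.
Context {R : realType} {n : nat} {c : R}.
Variables M u : 'rV[R]_n.
Hypotheses (M1 : cdot c M M < 1) (u1 : cdot c u u < 1).

Local Notation m := (cdot c M M).
Local Notation q := (cdot c M u).
Local Notation r := (cdot c u u).
Local Notation Q l := (madd c M (madd c (l *: u) M)).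
Local Notation den l := (1 + m + 2 * (l * q)).
Local Notation P l := (lcomb M u ((2 + 2 * (l * q)) / den l) (l * (1 - m) / den l)).

Lemma sandwich_den_gt0 l : l ^+ 2 * r < 1 -> 0 < den l.
Proof.
move=> lr; rewrite -cdotZr; apply: mid_den_gt0 => //.
by rewrite cdotZl cdotZr mulrA -expr2.
Qed.

Lemma sandwich_scaleE l : l ^+ 2 * r < 1 -> Q l = P l.
Proof.
move=> lr; rewrite madd_sandwich //; last by rewrite cdotZl cdotZr mulrA -expr2.
by rewrite cdotZr /lcomb scalerA; congr (_ + _ *: _); ring.
Qed.

Lemma one_sub_cdot_sandwich_comb l : den l != 0 ->
  1 - cdot c (P l) (P l) = (1 - m) ^+ 2 * (1 - l ^+ 2 * r) / den l ^+ 2.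
Proof. by move=> d0; rewrite cdot_lcomb; field. Qed.

Local Notation line s := (P 0 + s *: (P 1 - P 0)).
Local Notation dline s := (1 + m + 2 * q - 2 * s * q).

Let m1_neq0 : 1 + m != 0.
Proof. have m0 := cdot_ge0 (c := c) M; rewrite gt_eqF //; lra. Qed.

Lemma sandwich_comb_on_line l : den l != 0 -> den 1 != 0 -> P l = line (l * den 1 / den l).
Proof.
move=> dl d1; rewrite mul1r in d1; apply/rowP => i; rewrite /lcomb !mxE.
by field; rewrite m1_neq0 d1 dl.
Qed.

Lemma sandwich_den_line s : dline s != 0 ->
  den (s * (1 + m) / dline s) = (1 + m) * den 1 / dline s.
Proof. by move=> ds; field. Qed.

Lemma line_on_sandwich_comb s : dline s != 0 -> den 1 != 0 ->
  line s = P (s * (1 + m) / dline s).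
Proof.
move=> ds d1; rewrite mul1r in d1; apply/rowP => i; rewrite sandwich_den_line // /lcomb !mxE.
by field; rewrite ds d1 m1_neq0.
Qed.

(* [dline s = 0] is the pole of the change of parameter in [line_on_sandwich_comb]. *)
Lemma line_pole_out_ball s : dline s = 0 -> den 1 != 0 -> 1 <= cdot c (line s) (line s).
Proof.
move=> ds d1; rewrite mul1r in d1.
have q0 : q != 0.
  by apply: contra_eq_neq ds => ->; rewrite !(mulr0, addr0, subr0).
have sq : s * (2 * q) = 1 + m + 2 * q by lra.
have sE : s = (1 + m + 2 * q) / (2 * q) by rewrite -sq mulfK // mulf_neq0 ?pnatr_eq0.
have -> : line s = lcomb M u 1 ((1 - m) / (2 * q)).
  by apply/rowP => i; rewrite sE /lcomb !mxE; field; rewrite q0 d1 m1_neq0.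
rewrite cdot_lcomb.
have -> : 1 * 1 * m + (1 * ((1 - m) / (2 * q)) + (1 - m) / (2 * q) * 1) * q +
  (1 - m) / (2 * q) * ((1 - m) / (2 * q)) * r = 1 + ((1 - m) / (2 * q)) ^+ 2 * r.
  by field.
by rewrite lerDl mulr_ge0 ?sqr_ge0 ?cdot_ge0.
Qed.

Lemma sandwich_line :
  [set Q l | l in [set l | l ^+ 2 * r < 1]] =
  [set x | cdot c x x < 1 /\ exists s, x = Q 0 + s *: (Q 1 - Q 0)].
Proof.
have d1 : den 1 != 0 by rewrite gt_eqF // sandwich_den_gt0 // expr1n mul1r.
have r0 : 0 ^+ 2 * r < 1 by rewrite expr0n mul0r.
have r1 : 1 ^+ 2 * r < 1 by rewrite expr1n mul1r.
rewrite !sandwich_scaleE //.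
apply/seteqP; split=> x /=.
  case=> l lr <-; have dl := sandwich_den_gt0 _ lr.
  rewrite sandwich_scaleE //; split; last first.
    by exists (l * den 1 / den l); apply: sandwich_comb_on_line => //; rewrite gt_eqF.
  rewrite -subr_gt0 one_sub_cdot_sandwich_comb ?gt_eqF //.
  by rewrite divr_gt0 ?exprn_gt0 // mulr_gt0 ?exprn_gt0 ?subr_gt0.
case=> x1 [s xs]; subst x.
have [ds|ds] := eqVneq (dline s) 0.
  by have := line_pole_out_ball _ ds d1; rewrite leNgt x1.
rewrite line_on_sandwich_comb // in x1 *; set l := s * (1 + m) / dline s in x1 *.
have dl : den l != 0 by rewrite sandwich_den_line // !mulf_neq0 ?invr_eq0.
have lr : l ^+ 2 * r < 1.
  have m1 : 1 - m != 0 by rewrite subr_eq0 gt_eqF.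
  move: x1; rewrite -subr_gt0 one_sub_cdot_sandwich_comb //.
  by rewrite pmulr_lgt0 ?invr_gt0 ?exprn_even_gt0 // pmulr_rgt0 ?exprn_even_gt0 // subr_gt0.
by exists l; rewrite ?sandwich_scaleE.
Qed.

End SandwichLine.

Theorem theorem2 (R : realType) (n : nat) (c : R) (A B : 'rV[R]_n) :
  0 < c -> (2 <= n)%N -> enorm A < c -> enorm B < c -> A != B ->
  [set PAB c A B t | t in [set: R]] =
  [set x : 'rV[R]_n | enorm x < c /\ exists s : R, x = A + s *: (B - A)].
Proof.
move=> c0 _; rewrite !enorm_lt_cdot // => A1 B1 AB.
set M := Defs.mscale c 2^-1 A; set u := madd c (- M) (madd c B (- M)).
have M1 : cdot c M M < 1 by apply: cdot_mscale_lt1.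
have NM1 : cdot c (- M) (- M) < 1 by rewrite cdotNl cdotNr opprK.
have u1 : cdot c u u < 1 by do 2 apply: cdot_madd_lt1 => //.
have AE : A = madd c M (madd c (0 *: u) M) by rewrite scale0r madd0l madd_mscale_half.
have BE : B = madd c M (madd c (1 *: u) M) by rewrite scale1r madd_sandwichK.
have u0 : u != 0 by apply: contraNneq AB => u0; rewrite AE BE u0 !scaler0.
have -> : [set PAB c A B t | t in [set: R]] =
    (fun v => madd c M (madd c v M)) @` range (fun t => Defs.mscale c t u).
  rewrite image_comp; apply: eq_imagel => t _.
  by rewrite /PAB /msub -/M -/u /= mcoadd_madd ?cdot_mscale_lt1.
rewrite range_mscale // image_comp sandwich_line // -AE -BE.
by apply: eq_set => x; rewrite enorm_lt_cdot.
Qed.
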